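(* Let $G$ be a finite non-abelian group satisfying condition (Con). Then the isoperimetric number of $\mathcal C_G$ satisfies $$\frac{|Z(G)|}{2}\le i(\mathcal C_G)\le \sqrt{|Z(G)|\big(2(|G|-1)-|Z(G)|\big)}.$$
   Context: For a finite group $G$, the commuting graph $\mathcal C_G$ is the simple undirected graph with vertex set $G$ in which distinct $u,v\in G$ are adjacent iff $uv=vu$. $Z(G)$ is the center of $G$ and $C(v)=\{w\in G: wv=vw\}$ the centralizer of $v$. Condition (Con): for all $u,v\in G\setminus Z(G)$, either $C(u)=C(v)$ or $C(u)\cap C(v)=Z(G)$. For a graph $\Gamma$ with vertex set $V$, $\partial S$ is the set of edges with exactly one endpoint in $S$, and the isoperimetric number is $i(\Gamma)=\min\{|\partial S|/|S|: S\subseteq V,\ 0<|S|\le |V|/2\}$. *)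

From mathcomp Require Import all_boot all_order all_algebra all_fingroup all_solvable.
Set Implicit Arguments. Unset Strict Implicit. Unset Printing Implicit Defensive.
Import Order.TTheory GRing.Theory Num.Theory.
Local Open Scope group_scope.

Definition Con (gT : finGroupType) : Prop :=
  forall u v : gT, u \notin 'Z([set: gT]) -> v \notin 'Z([set: gT]) ->
    'C[u] = 'C[v] \/ 'C[u] :&: 'C[v] = 'Z([set: gT]).

Definition commuting_adj (gT : finGroupType) (u v : gT) : bool :=
  (u != v) && (u * v == v * u)%g.

(* Edge boundary of S: edges with exactly one endpoint in S, each edge
   represented once as the ordered pair (u, v) with u in S, v not in S. *)
Definition edge_boundary (gT : finGroupType) (S : {set gT}) : {set gT * gT} :=
  [set p | [&& p.1 \in S, p.2 \notin S & commuting_adj p.1 p.2]].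

(* Isoperimetric number of the commuting graph, as a rational number:
   minimum of |dS|/|S| over 0 < |S| <= |G|/2.  The neutral value #|gT| is an
   upper bound of every ratio (|dS| <= |S| * |G|), so it never affects the min
   (and the admissible family is nonempty as soon as |G| >= 2). *)
Definition isoperimetric_number (gT : finGroupType) : rat :=
  (\big[Order.min/(#|gT|%:R : rat)]_(S : {set gT} | (0 < #|S|)%N && (2 * #|S| <= #|gT|)%N)
     ((#|edge_boundary S|%:R : rat) / (#|S|%:R)))%R.

From mathcomp Require Import all_boot all_order all_algebra all_fingroup all_solvable.
From mathcomp Require Import zify lra.
Import Order.TTheory GRing.Theory Num.Theory.
Local Open Scope ring_scope.

(* Lower bound z/2 <= i(C_G).  Let S be admissible (0 < |S| <= n/2) and
   a = |S :&: Z|.  Central elements commute with everything, so the boundary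
   of S contains every pair (x, y) with x in S :&: Z, y outside S, and every
   pair (x, y) with x in S :\: Z, y in Z :\: S; hence
   |dS| >= a (n - |S|) + (|S| - a)(z - a), which is at least z |S| / 2 because
   both |S| and z are at most n/2 (a purely arithmetic fact).

   Upper bound.  For u outside Z, condition (Con) forces every neighbour of an
   element x of B = C(u) :\: Z to lie in C(x) = C(u), so the only boundary
   edges of B go to Z: |dB| <= z |B|.  As C(u) is a proper subgroup, B is
   admissible, so i(C_G) <= z, and z <= sqrt(z (2(n - 1) - z)) since z < n. *)

Lemma boundary_count_bound (a s z n e : nat) :
  (a <= z)%N -> (a <= s)%N -> (2 * z <= n)%N -> (2 * s <= n)%N ->
  (a * (n - s) + (s - a) * (z - a) <= e)%N -> (z * s <= 2 * e)%N.
Proof.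
move=> az aS z2 s2 le_e.
have [b eq_s] : exists b, s = (b + a)%N by exists (s - a)%N; rewrite subnK.
have [w eq_z] : exists w, z = (w + a)%N by exists (z - a)%N; rewrite subnK.
have [c eq_n] : exists c, n = (c + s)%N by exists (n - s)%N; rewrite subnK; lia.
subst n s z; rewrite !addnK in le_e *.
(* 2 a (n - s) >= a s + a z because n - s >= s and n - s >= z. *)
have ns_s : (a * (b + a) <= a * c)%N by apply: leq_mul => //; lia.
have ns_z : (a * (w + a) <= a * c)%N by apply: leq_mul => //; lia.
nia.
Qed.

Section CommutingGraph.
Context {gT : finGroupType}.
Local Notation G := [set: gT].
Local Notation Z := 'Z(G)%g.

(* A proper subgroup has index at least 2, hence at most half the elements. *)
Lemma proper_subgroup_half (H : {group gT}) : H :!=: G -> (2 * #|H| <= #|gT|)%N.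
Proof.
move=> HneG; rewrite -cardsT -(Lagrange (subsetT H)) mulnC leq_mul2l.
by rewrite indexg_gt1 subTset eq_sym HneG orbT.
Qed.

Lemma center_half : ~~ abelian G -> (2 * #|Z| <= #|gT|)%N.
Proof. by move=> nabG; apply: proper_subgroup_half; apply: contra nabG => /eqP/center_idP. Qed.

Lemma center_commute (x y : gT) : x \in Z -> commute x y.
Proof. by case/centerP=> _; apply; rewrite inE. Qed.

Lemma edge_boundary_lower (S : {set gT}) :
  (2 * #|Z| <= #|gT|)%N -> (2 * #|S| <= #|gT|)%N ->
  (#|Z| * #|S| <= 2 * #|edge_boundary S|)%N.
Proof.
move=> z2 s2.
set A := setX (S :&: Z) (~: S); set B := setX (S :\: Z) (Z :\: S).
have AB_boundary : A :|: B \subset edge_boundary S.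
  apply/subsetP=> -[x y].
  case/setUP=> [/setXP[/setIP[xS xZ] /setCP/negP yS] | /setXP[/setDP[xS _] /setDP[yZ yS]]];
    rewrite in_set /commuting_adj /= xS yS; apply/and4P; split=> //;
    try by apply: contraNneq yS => <-.
  - exact/eqP/center_commute.
  - exact/eqP/esym/center_commute.
have AB_disjoint : A :&: B = set0.
  apply/setP=> -[x y]; rewrite in_set0; apply/setIP.
  by case=> /setXP[/setIP[_ xZ] _] /setXP[/setDP[_ /negP]].
have := subset_leq_card AB_boundary.
rewrite cardsU AB_disjoint cards0 subn0 !cardsX !cardsD (setIC Z S).
have -> : #|~: S| = (#|gT| - #|S|)%N by rewrite -(cardsC S) addKn.
apply: boundary_count_bound => //.
- exact/subset_leq_card/subsetIr.
- exact/subset_leq_card/subsetIl.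
Qed.

Lemma edge_boundary_centralizer (u : gT) : Con gT -> u \notin Z ->
  edge_boundary ('C[u]%g :\: Z) \subset setX ('C[u]%g :\: Z) Z.
Proof.
move=> con uZ; apply/subsetP=> -[x y].
rewrite in_set /commuting_adj /= => /and4P[xB yB _ /eqP cxy].
apply/setXP; split=> //; apply: contraR yB => yZ.
have [xCu xZ] := setDP xB; apply/setDP; split=> //.
have yCx : y \in 'C[x]%g by apply/cent1P.
case: (con x u xZ uZ) => [<- // | CxCu].
have : x \in 'C[x]%g :&: 'C[u]%g by apply/setIP; split; [apply: cent1id | ].
by rewrite CxCu (negbTE xZ).
Qed.

Lemma noncentral_exists : ~~ abelian G -> exists u : gT, u \notin Z.
Proof.
move=> nabG; case: (pickP [pred u | u \notin Z]) => [u uZ | allZ]; first by exists u.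
case/negP: nabG; apply/center_idP/setP=> x.
by rewrite in_setT; apply/negbFE/allZ.
Qed.

Lemma centralizer_proper (u : gT) : u \notin Z -> 'C[u]%g :!=: G.
Proof.
move=> uZ; apply: contraNneq uZ => CuG; apply/centerP; split=> [|y _]; first by rewrite inE.
by apply/esym/cent1P; rewrite CuG inE.
Qed.

Definition admissible (S : {set gT}) : bool := (0 < #|S|)%N && (2 * #|S| <= #|gT|)%N.

Lemma isoperimetric_ge (b : rat) : b <= #|gT|%:R ->
  (forall S, admissible S -> b * #|S|%:R <= #|edge_boundary S|%:R) ->
  b <= isoperimetric_number gT.
Proof.
move=> b_le bS; apply: le_bigmin => // S /andP[s0 s2].
by rewrite ler_pdivlMr ?ltr0n //; apply: bS; rewrite /admissible s0.
Qed.

Lemma isoperimetric_le (S : {set gT}) : admissible S ->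
  isoperimetric_number gT <= #|edge_boundary S|%:R / #|S|%:R.
Proof. by move=> adS; apply: (bigmin_le_cond _ _ adS). Qed.

Lemma isoperimetric_lower : ~~ abelian G -> #|Z|%:R / 2 <= isoperimetric_number gT.
Proof.
move=> nabG; have z2 := center_half nabG.
apply: isoperimetric_ge => [|S /andP[_ s2]].
  by rewrite ler_pdivrMr // -natrM ler_nat; lia.
rewrite mulrAC ler_pdivrMr // -!natrM ler_nat [X in (_ <= X)%N]mulnC.
exact: edge_boundary_lower.
Qed.

Lemma isoperimetric_upper : ~~ abelian G -> Con gT -> isoperimetric_number gT <= #|Z|%:R.
Proof.
move=> nabG con; have [u uZ] := noncentral_exists nabG.
set B := 'C[u]%g :\: Z.
have adB : admissible B.
  rewrite /admissible; apply/andP; split.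
    by apply/card_gt0P; exists u; apply/setDP; split; [apply: cent1id | ].
  apply: leq_trans (proper_subgroup_half 'C[u]%G (centralizer_proper u uZ)).
  by rewrite leq_mul2l subset_leq_card ?subsetDl.
apply: le_trans (isoperimetric_le B adB) _.
rewrite ler_pdivrMr ?ltr0n; last by case/andP: adB.
rewrite -natrM ler_nat mulnC -cardsX subset_leq_card //.
exact: edge_boundary_centralizer.
Qed.

End CommutingGraph.

Lemma le_sqrt_center_bound (R : rcfType) (z n : R) :
  1 <= z -> 2 * z <= n -> z <= Num.sqrt (z * (2 * (n - 1) - z)).
Proof.
move=> z1 zn; rewrite -[X in X <= _]ger0_norm ?(le_trans ler01) // -sqrtr_sqr ler_sqrt; nra.
Qed.

Theorem proposition3p6 (R : rcfType) (gT : finGroupType) :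
  ~~ abelian [set: gT]%g -> Con gT ->
  (#|'Z([set: gT])%g|%:R / 2 <= ratr (isoperimetric_number gT) :> R) /\
  (ratr (isoperimetric_number gT) <=
     Num.sqrt (#|'Z([set: gT])%g|%:R * (2 * (#|gT|%:R - 1) - #|'Z([set: gT])%g|%:R)) :> R).
Proof.
move=> nabG con; split.
  have := isoperimetric_lower nabG; rewrite -(ler_rat R); apply: le_trans.
  by rewrite fmorph_div !rmorph_nat.
have := isoperimetric_upper nabG con; rewrite -(ler_rat R) ratr_nat => i_le_z.
apply: (le_trans i_le_z); apply: le_sqrt_center_bound.
  by rewrite ler1n cardG_gt0.
by rewrite -natrM ler_nat center_half.
Qed.
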